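(* Let $\eta^+,\eta^-\in(0,1]$, $\eta_d=\frac1{\eta^-}-\eta^+$, $\mathbb{P}_\xi$ a probability measure on $[-1,1]$ with mean zero and cumulative distribution function $F$, $\varphi(z)=\int_{-1}^zF(\xi)\mathrm{d}\xi$, $\dot y(x^b,x^r)=\eta^+x^b-\eta_d x^r\varphi(-x^b/x^r)$ for $x^r>0$, $\dot y(x^b,0)=\eta^+x^b-\eta_d[x^b]^-$, $\dot y^\star\in\mathbb{R}$, and let $g:\mathbb{R}_+\to\mathbb{R}$ be the unique function with $\dot y(g(x^r),x^r)=\dot y^\star$ for all $x^r\ge0$ (it is convex, continuous and nondecreasing). Let $T>0$, $c^b>0$, $c^r\ge0$, and $\bar x^r\ge0$, and consider the problem $\min_{x^r\in[0,\bar x^r]} T\big(c^b g(x^r)-c^r x^r\big)$. Let $g'_+$ and $g'_-$ denote the right and left derivatives of $g$. Define $x^r_\ast$ as follows: if $\bar x^r=0$ or $g'_+(0)\ge c^r/c^b$, then $x^r_\ast=0$; if $\bar x^r>0$ and $g'_-(\bar x^r)<c^r/c^b$, then $x^r_\ast=\bar x^r$; otherwise (i.e. $\bar x^r>0$, $g'_+(0)<c^r/c^b\le g'_-(\bar x^r)$), $x^r_\ast=\min\mathcal{X}_\star$, where $\mathcal{X}_\star=\{x\in(0,\bar x^r]: g'_-(x)\le c^r/c^b\le g'_+(x)\}$ is nonempty and compact. Then $x^r_\ast$ is an optimal solution of the problem.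
   Context: $[a]^-=\max\{-a,0\}$. In the paper, $[0,\bar x^r]$ is the feasible set of the reduced battery bidding problem in the reserve variable $x^r$ (base power $x^b=g(x^r)$), $c^b$ is the price of base power and $c^r$ the reserve price; $\mathcal{X}_\star$ is the set of zeros of the net marginal cost $T(c^bg'(x^r)-c^r)$ in the subdifferential sense. *)

From HB Require Import structures.
From mathcomp Require Import all_boot all_order all_algebra.
From mathcomp Require Import all_classical all_reals all_analysis.
Set Implicit Arguments. Unset Strict Implicit. Unset Printing Implicit Defensive.
Import Order.TTheory GRing.Theory Num.Theory.
Import numFieldNormedType.Exports.
Local Open Scope classical_set_scope.
Local Open Scope ring_scope.

Section Defs.
Variable R : realType.

Definition negpart (a : R) : R := Num.max (- a) 0.

Definition cdf (P : probability R R) (xi : R) : R :=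
  fine (P [set` `]-oo, xi]]).

(* phi(z) = int_{-1}^z F(xi) dxi  (Lebesgue integral over [-1,z];
   for z < -1 this is 0, which agrees with the oriented integral since F = 0 there) *)
Definition phi (P : probability R R) (z : R) : R :=
  Rintegral lebesgue_measure [set` `[-1, z]] (cdf P).

Definition ydot (P : probability R R) (etap etam : R) (xb xr : R) : R :=
  let etad := etam^-1 - etap in
  if 0 < xr then etap * xb - etad * xr * phi P (- xb / xr)
  else etap * xb - etad * negpart xb.

Definition rderiv (g : R -> R) (x : R) : R :=
  lim ((fun h => (g (x + h) - g x) / h) @ 0^'+).

Definition lderiv (g : R -> R) (x : R) : R :=
  lim ((fun h => (g x - g (x - h)) / h) @ 0^'+).

Definition objective (T cb cr : R) (g : R -> R) (x : R) : R :=
  T * (cb * g x - cr * x).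

Definition optimal (T cb cr xbar : R) (g : R -> R) (x : R) : Prop :=
  0 <= x <= xbar /\
  forall y, 0 <= y <= xbar -> objective T cb cr g x <= objective T cb cr g y.

Definition Xstar (cb cr xbar : R) (g : R -> R) : set R :=
  [set x | 0 < x <= xbar /\ lderiv g x <= cr / cb <= rderiv g x].

End Defs.

From Pilot Require Import Defs.
From HB Require Import structures.
From mathcomp Require Import all_boot all_order all_algebra.
From mathcomp Require Import all_classical all_reals all_analysis.
From mathcomp Require Import ring lra measurable_realfun.
Set Implicit Arguments. Unset Strict Implicit. Unset Printing Implicit Defensive.
Import Order.TTheory GRing.Theory Num.Theory.
Import numFieldNormedType.Exports.
Local Open Scope classical_set_scope.
Local Open Scope ring_scope.

(* ydot is the linear function etap x^b minus etad times the perspective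
   (x^b, x^r) |-> x^r phi(-x^b/x^r) of the convex function phi, so it is jointly
   concave, and it increases with slope at least etap in x^b; hence the level
   curve x^b = g(x^r) is convex. Since phi z >= z - 1, the chord slopes of g at 0
   are bounded below, so the one-sided derivatives of g are monotone limits of
   chord slopes. With c = c^r/c^b the objective is T c^b (g x - c x), and
   c <= g'_+(x) (resp. g'_-(x) <= c) says exactly that x minimises this tilted
   convex function on [x, +oo) (resp. on [0, x]), which settles the two boundary
   cases. Otherwise the infimum of the points of [0, xbar] minimising the tilt to
   their right is, by Lipschitz continuity of g and convexity, a minimiser on both
   sides, hence the least element of X_star and an optimal solution. *)

Section RintegralBounds.
Variable R : realType.
Local Notation mu := (@lebesgue_measure R).

Lemma lebesgue_measure_itv_bnd (a b : R) (ba bb : bool) : a <= b ->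
  mu [set` Interval (BSide ba a) (BSide bb b)] = (b - a)%:E.
Proof.
move=> ab; rewrite lebesgue_measure_itv/=; case: ifPn => //=.
by rewrite lte_fin -leNgt => ba_; rewrite (@le_anti _ _ a b) ?ab ?ba_ ?subrr.
Qed.

Lemma measurable_bounded_integrable_le (f : R -> R) (D : set R) (M : R) :
  measurable D -> (mu D < +oo)%E -> measurable_fun D f ->
  (forall x, D x -> `|f x| <= M) -> mu.-integrable D (EFin \o f).
Proof.
move=> mD finD mf fM.
apply: (@measurable_bounded_integrable _ _ _ mu f _ mD finD mf).
exists M; split; first exact: num_real.
by move=> N MN x /fM /le_trans; apply; exact: ltW.
Qed.

Lemma Rintegral_bounds (f : R -> R) (D : set R) (l lo hi : R) :
  measurable D -> mu D = l%:E -> measurable_fun D f ->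
  (forall x, D x -> lo <= f x <= hi) ->
  lo * l <= \int[mu]_(x in D) f x <= hi * l.
Proof.
move=> mD muD mf fb.
have finD : (mu D < +oo)%E by rewrite muD ltry.
pose B : R := `|lo| + `|hi|.
have [lo_B hi_B] : `|lo| <= B /\ `|hi| <= B by rewrite /B lerDl lerDr !normr_ge0.
have fB x : D x -> `|f x| <= B.
  move=> /fb /andP[lof fhi]; rewrite ler_norml.
  have := ler_norm hi; have := ler_norm (- lo); rewrite normrN.
  by move=> *; apply/andP; split; lra.
have cstE r : r * l = \int[mu]_(x in D) r.
  by rewrite Rintegral_cst// -[X in _ = _ * X]/(fine (mu D)) muD.
have intB r : `|r| <= B -> mu.-integrable D (EFin \o cst r).
  by move=> rB; apply: (measurable_bounded_integrable_le (M := B) mD finD).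
have intf : mu.-integrable D (EFin \o f).
  exact: measurable_bounded_integrable_le mD finD mf fB.
rewrite (cstE lo) (cstE hi); apply/andP; split; apply: le_Rintegral;
  rewrite ?(intB lo) ?(intB hi) => // x /fb /andP[] //.
Qed.

End RintegralBounds.

(* The suffix R sets these lemmas on the real-valued [Defs.cdf] apart from the
   library lemmas on the extended-real [cdf] of a random variable. *)
Section Cdf.
Variables (R : realType) (P : probability R R).
Hypothesis P11 : P [set` `[-1, 1]] = 1%E.
Local Notation F := (Defs.cdf P).

Lemma cdfR_ge0 x : 0 <= F x.
Proof. exact: fine_ge0. Qed.

Lemma cdfR_le1 x : F x <= 1.
Proof.
by rewrite -lee_fin fineK ?fin_num_measure// probability_le1.
Qed.

Lemma cdfR_nondecreasing : nondecreasing_fun F.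
Proof.
move=> x y xy; rewrite /Defs.cdf fine_le ?fin_num_measure//.
by apply: le_measure; rewrite ?inE// => z /=; rewrite !in_itv/= => /le_trans->.
Qed.

Lemma measurable_cdfR (D : set R) : measurable D -> measurable_fun D F.
Proof.
by move=> mD; apply: nondecreasing_measurable => //; exact: cdfR_nondecreasing.
Qed.

Lemma cdfR_lt (x : R) : x < -1 -> F x = 0.
Proof.
move=> x1; apply/eqP; rewrite eq_le cdfR_ge0 andbT -lee_fin fineK ?fin_num_measure//.
have : (P [set` `]-oo, x]] <= P (~` [set` `[-1, 1]%R]))%E.
  apply: le_measure; rewrite ?inE//; first exact: measurableC.
  by move=> z /=; rewrite !in_itv/= => zx /andP[z1 _]; lra.
by rewrite probability_setC// P11 subee.
Qed.

Lemma cdfR_ge (x : R) : 1 <= x -> F x = 1.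
Proof.
move=> x1; apply/eqP; rewrite eq_le cdfR_le1 -lee_fin fineK ?fin_num_measure//.
rewrite -P11; apply: le_measure; rewrite ?inE// => z /=.
by rewrite !in_itv/= => /andP[_ z1]; exact: le_trans z1 x1.
Qed.

End Cdf.

Section Phi.
Variables (R : realType) (P : probability R R).
Hypothesis P11 : P [set` `[-1, 1]] = 1%E.
Local Notation mu := (@lebesgue_measure R).
Local Notation F := (Defs.cdf P).

Lemma phi_lt (z : R) : z < -1 -> phi P z = 0.
Proof.
move=> z1; rewrite /phi (_ : [set` _] = set0) ?Rintegral_set0//.
by apply/seteqP; split => x //=; rewrite in_itv/=; lra.
Qed.

Lemma phi_ge0 (z : R) : 0 <= phi P z.
Proof. by apply: Rintegral_ge0 => x _; exact: cdfR_ge0. Qed.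

Lemma integrable_cdfR (D : set R) : measurable D -> (mu D < +oo)%E ->
  mu.-integrable D (EFin \o F).
Proof.
move=> mD finD; apply: (measurable_bounded_integrable_le (M := 1) mD finD).
  exact: measurable_cdfR.
by move=> x _; rewrite ger0_norm ?cdfR_ge0 ?cdfR_le1.
Qed.

Lemma phi_split (z w : R) : -1 <= z -> z <= w ->
  phi P w = phi P z + \int[mu]_(x in `]z, w]) F x.
Proof.
move=> z1 zw.
have intF : mu.-integrable `[-1, w] (EFin \o F).
  apply: integrable_cdfR; first exact: measurable_itv.
  by rewrite lebesgue_measure_itv_bnd ?ltry//; lra.
have eqD : [set` `[-1, w]] = `[-1, z] `|` `]z, w] :> set R.
  apply/seteqP; split => x /=; rewrite !in_itv/=.
  - by move=> /andP[x1 xw]; case: (leP x z) => xz; [left|right]; apply/andP.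
  - by case=> /andP[]; lra.
rewrite /phi eqD Rintegral_setU -?eqD//; try exact: measurable_itv.
by rewrite disj_set2E; apply/eqP/seteqP; split => x //= [] /[!in_itv]/=; lra.
Qed.

Lemma phi_increment (z w : R) : z <= w ->
  F z * (w - z) <= phi P w - phi P z <= F w * (w - z).
Proof.
move=> zw; have [z1|z1] := leP (-1) z.
  rewrite (phi_split z1 zw) addrAC subrr add0r.
  apply: Rintegral_bounds; [exact: measurable_itv|exact: lebesgue_measure_itv_bnd|
    exact: measurable_cdfR|].
  by move=> x /= /[!in_itv]/= /andP[zx xw]; rewrite !cdfR_nondecreasing// ltW.
rewrite (phi_lt z1) (cdfR_lt P11 z1) subr0 mul0r phi_ge0/=.
have [w1|w1] := leP (-1) w; last by rewrite phi_lt// mulr_ge0 ?cdfR_ge0// subr_ge0.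
have /andP[_ phiw] : 0 * (w - -1) <= phi P w <= F w * (w - -1).
  apply: Rintegral_bounds; [exact: measurable_itv|exact: lebesgue_measure_itv_bnd|
    exact: measurable_cdfR|].
  by move=> x /= /[!in_itv]/= /andP[_ xw]; rewrite cdfR_ge0 cdfR_nondecreasing.
by apply: (le_trans phiw); apply: ler_wpM2l; [exact: cdfR_ge0|lra].
Qed.

Lemma phi_lipschitz (z w : R) : z <= w -> 0 <= phi P w - phi P z <= w - z.
Proof.
move=> zw; have /andP[lo hi] := phi_increment zw.
apply/andP; split.
  by apply: le_trans lo; rewrite mulr_ge0 ?cdfR_ge0// subr_ge0.
by apply: (le_trans hi); rewrite ler_piMl ?subr_ge0 ?cdfR_le1.
Qed.

Lemma phi_three_chord (z m w : R) : z < m -> m < w ->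
  (phi P m - phi P z) * (w - m) <= (phi P w - phi P m) * (m - z).
Proof.
move=> zm mw.
have /andP[_ left] := phi_increment (ltW zm).
have /andP[right _] := phi_increment (ltW mw).
apply: (le_trans (ler_wpM2r _ left)); first by rewrite subr_ge0 ltW.
by rewrite mulrAC ler_wpM2r// subr_ge0 ltW.
Qed.

Lemma phi_ge (z : R) : z - 1 <= phi P z.
Proof.
have [z1|z1] := leP 1 z; last by apply: le_trans (phi_ge0 z); lra.
have /andP[+ _] := phi_increment z1.
rewrite cdfR_ge ?mul1r//; have := phi_ge0 1; lra.
Qed.

End Phi.

Section Convexity.
Variable R : realType.

Definition convex_on_ge0 (f : R -> R) : Prop :=
  forall a b c, 0 <= a -> a < b -> b < c ->
    (f b - f a) * (c - b) <= (f c - f b) * (b - a).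

Lemma convex_of_three_chord (f : R -> R) :
  (forall a b c, a < b -> b < c -> (f b - f a) * (c - b) <= (f c - f b) * (b - a)) ->
  forall t u v, 0 <= t <= 1 -> f (t * u + (1 - t) * v) <= t * f u + (1 - t) * f v.
Proof.
move=> chord.
have key t u v : 0 < t < 1 -> u < v ->
    f (t * u + (1 - t) * v) <= t * f u + (1 - t) * f v.
  move=> /andP[t0 t1] uv; set m := t * u + (1 - t) * v.
  have vmE : v - m = t * (v - u) by rewrite /m; ring.
  have muE : m - u = (1 - t) * (v - u) by rewrite /m; ring.
  have um : u < m by rewrite -subr_gt0 muE mulr_gt0 ?subr_gt0.
  have mv : m < v by rewrite -subr_gt0 vmE mulr_gt0 ?subr_gt0.
  have := chord _ _ _ um mv; rewrite vmE muE !mulrA ler_pM2r ?subr_gt0//; lra.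
move=> t u v /andP[t0 t1].
have [->|tn0] := eqVneq t 0; first by rewrite !mul0r !add0r subr0 !mul1r.
have [->|tn1] := eqVneq t 1; first by rewrite subrr !mul0r !addr0 !mul1r.
have t01 : 0 < t < 1 by rewrite !lt_neqAle eq_sym tn0 tn1 t0 t1.
have [uv|vu|->] := ltgtP u v; first exact: key.
- have t01' : 0 < 1 - t < 1 by case/andP: t01 => ? ?; apply/andP; split; lra.
  have := key _ _ _ t01' vu; rewrite (_ : 1 - (1 - t) = t); last ring.
  by rewrite addrC [X in _ <= X]addrC.
- by rewrite -!mulrDl subrKC !mul1r.
Qed.

Lemma convex_on_ge0_of_convex (f : R -> R) :
  (forall t u v, 0 <= u -> 0 <= v -> 0 <= t <= 1 ->
    f (t * u + (1 - t) * v) <= t * f u + (1 - t) * f v) ->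
  convex_on_ge0 f.
Proof.
move=> cvx a b c a0 ab bc.
have ca : 0 < c - a by rewrite subr_gt0 (lt_trans ab).
set t := (c - b) / (c - a).
have t01 : 0 <= t <= 1 by rewrite divr_ge0 ?ler_pdivrMr ?mul1r; lra.
have tE : t * a + (1 - t) * c = b by rewrite /t; field; rewrite gt_eqF.
have := cvx t a c a0 ltac:(lra) t01; rewrite tE => fb.
have e1 : t * (c - a) = c - b by rewrite /t divfK ?gt_eqF.
have e2 : (1 - t) * (c - a) = b - a by rewrite mulrBl mul1r e1; ring.
clearbody t; by rewrite -e1 -e2 !mulrA ler_pM2r//; lra.
Qed.

End Convexity.

Section Perspective.
Variables (R : realType) (P : probability R R).
Hypothesis P11 : P [set` `[-1, 1]] = 1%E.

(* The perspective of phi, extended to [x = 0] by its limit [negpart b]. *)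
Definition phi_persp (b x : R) : R :=
  if 0 < x then x * phi P (- b / x) else negpart b.

Lemma negpart_ge0 (a : R) : 0 <= negpart a.
Proof. by rewrite /negpart le_max lexx orbT. Qed.

Lemma negpart_geN (a : R) : - a <= negpart a.
Proof. by rewrite /negpart le_max lexx. Qed.

Lemma negpart_convex (b1 b2 t : R) : 0 <= t <= 1 ->
  negpart (t * b1 + (1 - t) * b2) <= t * negpart b1 + (1 - t) * negpart b2.
Proof.
move=> /andP[t0 t1].
rewrite {1}/negpart ge_max addr_ge0 ?mulr_ge0 ?negpart_ge0 ?subr_ge0//.
have := ler_wpM2l t0 (negpart_geN b1).
have := ler_wpM2l (ltac:(lra) : 0 <= 1 - t) (negpart_geN b2).
by rewrite andbT; lra.
Qed.

Lemma phi_le_add_max (z d : R) : phi P (z + d) <= phi P z + Num.max d 0.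
Proof.
have [d0|d0] := leP 0 d.
  have /andP[_] := phi_lipschitz P11 (ltac:(lra) : z <= z + d); lra.
have /andP[+ _] := phi_lipschitz P11 (ltac:(lra) : z + d <= z); lra.
Qed.

Lemma phi_convex (t u v : R) : 0 <= t <= 1 ->
  phi P (t * u + (1 - t) * v) <= t * phi P u + (1 - t) * phi P v.
Proof. by apply: convex_of_three_chord => a b c; exact: phi_three_chord. Qed.

Lemma phi_persp_convex_pos_zero (b1 b2 x t : R) : 0 < x -> 0 < t <= 1 ->
  phi_persp (t * b1 + (1 - t) * b2) (t * x) <=
  t * phi_persp b1 x + (1 - t) * negpart b2.
Proof.
move=> x0 /andP[t0 t1]; have tx0 : 0 < t * x by rewrite mulr_gt0.
rewrite /phi_persp tx0 x0.
have -> : - (t * b1 + (1 - t) * b2) / (t * x) =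
    - b1 / x + ((1 - t) * - b2) / (t * x).
  by field; rewrite !gt_eqF.
apply: le_trans (ler_wpM2l (ltW tx0) (phi_le_add_max _ _)) _.
rewrite mulrDr maxr_pMr ?(ltW tx0)// mulr0 mulrCA divff ?gt_eqF// mulr1.
by rewrite /negpart maxr_pMr ?subr_ge0// mulr0 mulrA.
Qed.

Lemma phi_persp_convex_pos (b1 b2 x1 x2 t : R) : 0 < x1 -> 0 < x2 -> 0 <= t <= 1 ->
  phi_persp (t * b1 + (1 - t) * b2) (t * x1 + (1 - t) * x2) <=
  t * phi_persp b1 x1 + (1 - t) * phi_persp b2 x2.
Proof.
move=> x10 x20 /andP[t0 t1]; set x := t * x1 + (1 - t) * x2.
have tx1 : 0 <= t * x1 by rewrite mulr_ge0// ltW.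
have tx2 : 0 <= (1 - t) * x2 by rewrite mulr_ge0 ?subr_ge0// ltW.
have x0 : 0 < x.
  have [tp|] := ltP 0 t; first by have := mulr_gt0 tp x10; rewrite /x; lra.
  move=> t_le0; have t_eq0 : t = 0 by apply/le_anti; rewrite t_le0 t0.
  by rewrite /x t_eq0 mul0r subr0 mul1r add0r.
set s := t * x1 / x.
have xs : x * s = t * x1 by rewrite /s mulrC divfK ?gt_eqF.
have xs' : x * (1 - s) = (1 - t) * x2 by rewrite mulrBr mulr1 xs /x; ring.
have s01 : 0 <= s <= 1 by rewrite /s divr_ge0 ?(ltW x0)// ler_pdivrMr// mul1r /x; lra.
clearbody x s; rewrite /phi_persp x0 x10 x20.
have -> : - (t * b1 + (1 - t) * b2) / x = s * (- b1 / x1) + (1 - s) * (- b2 / x2).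
  apply: (mulfI (lt0r_neq0 x0)); rewrite mulrDr !mulrA xs xs'.
  by field; rewrite !gt_eqF.
apply: le_trans (ler_wpM2l (ltW x0) (phi_convex _ _ s01)) _.
by rewrite mulrDr !mulrA xs xs' -!mulrA.
Qed.

Lemma phi_persp0 (b : R) : phi_persp b 0 = negpart b.
Proof. by rewrite /phi_persp ltxx. Qed.

Lemma phi_persp_convex (b1 b2 x1 x2 t : R) : 0 <= x1 -> 0 <= x2 -> 0 <= t <= 1 ->
  phi_persp (t * b1 + (1 - t) * b2) (t * x1 + (1 - t) * x2) <=
  t * phi_persp b1 x1 + (1 - t) * phi_persp b2 x2.
Proof.
move=> x10 x20 t01; have /andP[t0 t1] := t01.
have [->|tn0] := eqVneq t 0; first by rewrite !mul0r !add0r subr0 !mul1r.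
have [->|tn1] := eqVneq t 1; first by rewrite subrr !mul0r !addr0 !mul1r.
have tp : 0 < t by rewrite lt_neqAle eq_sym tn0.
have t'p : 0 < 1 - t by rewrite subr_gt0 lt_neqAle tn1.
move: x10 x20; rewrite [0 <= x1]le_eqVlt [0 <= x2]le_eqVlt.
move=> /predU1P[<-|x1p] /predU1P[<-|x2p].
- by rewrite !mulr0 addr0 !phi_persp0; exact: negpart_convex.
- rewrite mulr0 add0r phi_persp0 addrC [X in _ <= X]addrC.
  have := @phi_persp_convex_pos_zero b2 b1 x2 (1 - t) x2p.
  rewrite (_ : 1 - (1 - t) = t); last ring.
  by apply; rewrite t'p; lra.
- rewrite mulr0 addr0 phi_persp0.
  by apply: phi_persp_convex_pos_zero; rewrite ?tp.
- exact: phi_persp_convex_pos.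
Qed.

Lemma phi_persp_antitone (b b' x : R) : 0 <= x -> b <= b' ->
  phi_persp b' x <= phi_persp b x.
Proof.
move=> x0 bb; rewrite /phi_persp; case: ifP => xp.
  have bx : - b' / x <= - b / x by rewrite ler_pM2r ?invr_gt0// lerN2.
  by have /andP[+ _] := phi_lipschitz P11 bx; rewrite subr_ge0 ler_pM2l.
by rewrite /negpart ge_max !le_max lexx orbT andbT lerN2 bb.
Qed.

Lemma phi_persp_ge (b h : R) : 0 < h -> negpart b - h <= phi_persp b h.
Proof.
move=> h0; rewrite /phi_persp h0 /negpart.
have hb : h * (- b / h) = - b by rewrite mulrC divfK ?gt_eqF.
have := ler_wpM2l (ltW h0) (phi_ge P11 (- b / h)); rewrite mulrBr hb mulr1 => phi_lb.
have := mulr_ge0 (ltW h0) (phi_ge0 P (- b / h)).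
by rewrite lerBlDr ge_max => *; apply/andP; split; lra.
Qed.

End Perspective.

Section BaseFunction.
Variables (R : realType) (P : probability R R).
Hypothesis P11 : P [set` `[-1, 1]] = 1%E.
Variables (etap etam ystar : R) (g : R -> R).
Hypotheses (etap01 : 0 < etap <= 1) (etam01 : 0 < etam <= 1).
Hypothesis g_level : forall xr, 0 <= xr -> ydot P etap etam (g xr) xr = ystar.
Local Notation etad := (etam^-1 - etap).
Local Notation ydot := (ydot P etap etam).

Lemma etad_ge0 : 0 <= etad.
Proof.
case/andP: etap01 => _ ep1; case/andP: etam01 => em0 em1.
by rewrite subr_ge0 (le_trans ep1)// invr_ge1 ?unitfE ?gt_eqF.
Qed.

Lemma ydotE (b x : R) : ydot b x = etap * b - etad * phi_persp P b x.
Proof. by rewrite /ydot /phi_persp; case: ifP; rewrite ?mulrA. Qed.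

Lemma ydot_increment (b b' x : R) : 0 <= x -> b <= b' ->
  etap * (b' - b) <= ydot b' x - ydot b x.
Proof.
move=> x0 bb; rewrite !ydotE.
have := ler_wpM2l etad_ge0 (phi_persp_antitone P11 x0 bb); lra.
Qed.

Lemma ydot_le_ydot0 (b h : R) : 0 < h -> ydot b h <= ydot b 0 + etad * h.
Proof.
move=> h0; rewrite !ydotE phi_persp0.
have := ler_wpM2l etad_ge0 (phi_persp_ge P11 b h0); lra.
Qed.

Lemma ydot_concave (b1 b2 x1 x2 t : R) : 0 <= x1 -> 0 <= x2 -> 0 <= t <= 1 ->
  t * ydot b1 x1 + (1 - t) * ydot b2 x2 <=
  ydot (t * b1 + (1 - t) * b2) (t * x1 + (1 - t) * x2).
Proof.
move=> x10 x20 t01; rewrite !ydotE.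
have := ler_wpM2l etad_ge0 (phi_persp_convex P11 b1 b2 x10 x20 t01); lra.
Qed.

Lemma g_le_of_ydot (x v : R) : 0 <= x -> ystar <= ydot v x -> g x <= v.
Proof.
move=> x0 yv; rewrite leNgt; apply/negP => vg.
have := ydot_increment x0 (ltW vg); rewrite g_level//.
have : 0 < etap * (g x - v) by rewrite mulr_gt0 ?subr_gt0//; case/andP: etap01.
lra.
Qed.

Lemma g_convex : convex_on_ge0 g.
Proof.
apply: convex_on_ge0_of_convex => t u v u0 v0 t01; have /andP[t0 t1] := t01.
apply: g_le_of_ydot; first by rewrite addr_ge0 ?mulr_ge0 ?subr_ge0.
by apply: le_trans (ydot_concave _ _ u0 v0 t01); rewrite !g_level//; lra.
Qed.

Lemma g_slope0_lb (h : R) : 0 < h -> - (etad / etap) * h <= g h - g 0.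
Proof.
move=> h0; have ep0 : 0 < etap by case/andP: etap01.
rewrite mulNr lerNl opprB mulrAC ler_pdivlMr//.
have := ydot_le_ydot0 (g h) h0; rewrite g_level => [y_ub|]; last exact: ltW.
have [g0h|g0h] := leP (g 0) (g h).
  have : (g 0 - g h) * etap <= 0 by rewrite pmulr_lle0// subr_le0.
  by have := mulr_ge0 etad_ge0 (ltW h0); lra.
have := ydot_increment (lexx 0) (ltW g0h); rewrite g_level//; lra.
Qed.

End BaseFunction.

Section Minimality.
Variable R : realType.
Implicit Types (f : R -> R) (x : R).

Definition right_min f x : Prop := forall w, x <= w -> f x <= f w.

Definition left_min f x : Prop := forall y, 0 <= y -> y <= x -> f x <= f y.

Lemma right_left_min f x : right_min f x -> left_min f x ->
  forall y, 0 <= y -> f x <= f y.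
Proof. by move=> fr fl y y0; have [/fr|/ltW/(fl _ y0)] := leP x y. Qed.

Lemma convex_on_ge0_tilt f (c : R) : convex_on_ge0 f ->
  convex_on_ge0 (fun x => f x - c * x).
Proof.
move=> f_cvx a b d a0 ab bd; have := f_cvx _ _ _ a0 ab bd; lra.
Qed.

Lemma convex_on_ge0_descent f (y x w : R) : convex_on_ge0 f ->
  0 <= y -> y < x -> x <= w -> f w < f x -> f x < f y.
Proof.
move=> f_cvx y0 yx xw fwx.
have {}xw : x < w.
  by rewrite lt_neqAle xw andbT; apply: contraTneq fwx => ->; rewrite ltxx.
have : (f x - f y) * (w - x) < 0.
  apply: le_lt_trans (f_cvx _ _ _ y0 yx xw) _.
  by rewrite pmulr_llt0 ?subr_gt0 ?subr_lt0.
by rewrite pmulr_llt0 ?subr_gt0 ?subr_lt0.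
Qed.

End Minimality.

Section OneSidedDerivatives.
Variables (R : realType) (g : R -> R) (K : R).
Hypothesis g_cvx : convex_on_ge0 g.
Hypothesis g_slope0 : forall h, 0 < h -> K * h <= g h - g 0.

Let slope (a b : R) := (g b - g a) / (b - a).

Let slope_le (a b c d : R) : a < b -> c < d ->
  (g b - g a) * (d - c) <= (g d - g c) * (b - a) -> slope a b <= slope c d.
Proof.
by move=> ab cd; rewrite /slope ler_pdivrMr ?subr_gt0// mulrAC ler_pdivlMr ?subr_gt0.
Qed.

Let slope_12_23 (a b c : R) : 0 <= a -> a < b -> b < c -> slope a b <= slope b c.
Proof. by move=> a0 ab bc; apply: slope_le => //; exact: g_cvx. Qed.

Let slope_12_13 (a b c : R) : 0 <= a -> a < b -> b < c -> slope a b <= slope a c.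
Proof.
move=> a0 ab bc; have cvx := g_cvx a0 ab bc.
by apply: slope_le (lt_trans ab bc) _ => //; lra.
Qed.

Let slope_13_23 (a b c : R) : 0 <= a -> a < b -> b < c -> slope a c <= slope b c.
Proof.
move=> a0 ab bc; have cvx := g_cvx a0 ab bc.
by apply: slope_le (lt_trans ab bc) bc _; lra.
Qed.

Let slope_ge (a b : R) : 0 <= a -> a < b -> K <= slope a b.
Proof.
move=> a0 ab; have b0 : 0 < b by exact: le_lt_trans ab.
have K_le : K <= slope 0 b by rewrite /slope subr0 ler_pdivlMr// g_slope0.
move: a0; rewrite le_eqVlt => /predU1P[<-//|a0].
exact: le_trans K_le (slope_13_23 (lexx 0) a0 ab).
Qed.

Lemma convex_lipschitz (B : R) : exists L, forall a b, 0 <= a -> a <= b -> b <= B ->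
  `|g b - g a| <= L * (b - a).
Proof.
exists (`|K| + `|slope B (B + 1)|) => a b a0 ab bB.
move: ab; rewrite le_eqVlt => /predU1P[<-|ab]; first by rewrite !subrr normr0 mulr0.
have lo := slope_ge a0 ab.
have hi : slope a b <= slope B (B + 1).
  apply: le_trans (slope_12_13 a0 ab _) (slope_13_23 a0 _ _); lra.
have ba : 0 < b - a by rewrite subr_gt0.
rewrite (_ : g b - g a = slope a b * (b - a)); last by rewrite /slope divfK ?gt_eqF.
rewrite normrM (gtr0_norm ba) ler_pM2r// ler_norml.
have := ler_norm (slope B (B + 1)); have := ler_norm (- K); rewrite normrN.
have := normr_ge0 K; have := normr_ge0 (slope B (B + 1)).
by move=> *; apply/andP; split; lra.
Qed.

Let rquot (x h : R) : (g (x + h) - g x) / h = slope x (x + h).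
Proof. by rewrite /slope addrAC subrr add0r. Qed.

Let rquot_lb (x : R) : 0 <= x ->
  has_lbound ((fun h => (g (x + h) - g x) / h) @` `]0, +oo[).
Proof.
move=> x0; exists K => _ [h /= hp <-]; rewrite in_itv/= andbT in hp.
by rewrite rquot; apply: slope_ge => //; lra.
Qed.

Let rquot_neq0 (x : R) : (fun h => (g (x + h) - g x) / h) @` `]0, +oo[ !=set0.
Proof. by exists ((g (x + 1) - g x) / 1), 1 => //=; rewrite in_itv/= andbT. Qed.

Let rderiv_inf (x : R) : 0 <= x ->
  rderiv g x = inf ((fun h => (g (x + h) - g x) / h) @` `]0, +oo[).
Proof.
move=> x0; apply: cvg_lim => //; apply: nondecreasing_at_right_cvgr => //.
  move=> h1 h2 /[!in_itv]/= /andP[h1p _] /andP[h2p _] h12.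
  rewrite !rquot; move: h12; rewrite le_eqVlt => /predU1P[->//|h12].
  by apply: slope_12_13 => //; lra.
exact: rquot_lb.
Qed.

Lemma le_rderivP (x c : R) : 0 <= x ->
  c <= rderiv g x <-> right_min (fun y => g y - c * y) x.
Proof.
move=> x0; rewrite rderiv_inf//; split => [c_le w|rmin].
  rewrite le_eqVlt => /predU1P[->//|xw].
  have cs : c <= slope x w.
    rewrite -[w](subrKC x) -rquot; apply: le_trans c_le (ge_inf (rquot_lb x0) _).
    by exists (w - x) => //=; rewrite in_itv/= andbT subr_gt0.
  by move: cs; rewrite /slope ler_pdivlMr ?subr_gt0//; lra.
apply: lb_le_inf (rquot_neq0 x) _.
move=> _ [h /= hp <-]; rewrite in_itv/= andbT in hp.
by rewrite ler_pdivlMr//; have := rmin (x + h); lra.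
Qed.

Let lquot (x h : R) : (g x - g (x - h)) / h = slope (x - h) x.
Proof. by rewrite /slope opprB addrCA subrr addr0. Qed.

Let lquot_ub (x : R) : 0 < x ->
  has_ubound ((fun h => (g x - g (x - h)) / h) @` `]0, x]).
Proof.
move=> x0; exists (slope x (x + 1)) => _ [h /= hp <-]; rewrite in_itv/= in hp.
by rewrite lquot; apply: slope_12_23; lra.
Qed.

Let lquot_neq0 (x : R) : 0 < x ->
  (fun h => (g x - g (x - h)) / h) @` `]0, x] !=set0.
Proof. by exists ((g x - g (x - x)) / x), x => //=; rewrite in_itv/= lexx andbT. Qed.

Let lderiv_sup (x : R) : 0 < x ->
  lderiv g x = sup ((fun h => (g x - g (x - h)) / h) @` `]0, x]).
Proof.
move=> x0; apply: cvg_lim => //; apply: nonincreasing_at_right_cvgr.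
- by rewrite bnd_simp.
- move=> h1 h2 /[!in_itv]/= /andP[h1p h1x] /andP[h2p h2x] h12.
  rewrite !lquot; move: h12; rewrite le_eqVlt => /predU1P[->//|h12].
  by apply: slope_13_23; lra.
- exact: lquot_ub.
Qed.

Lemma le_lderivP (x c : R) : 0 < x ->
  lderiv g x <= c <-> left_min (fun y => g y - c * y) x.
Proof.
move=> x0; rewrite lderiv_sup//; split => [le_c y y0|lmin].
  rewrite le_eqVlt => /predU1P[->//|yx].
  have sc : slope y x <= c.
    apply: le_trans _ le_c; rewrite -[y in slope y](subKr x) -lquot.
    apply: (ub_le_sup (lquot_ub x0)).
    by exists (x - y) => //=; rewrite in_itv/= subr_gt0 yx; lra.
  by move: sc; rewrite /slope ler_pdivrMr ?subr_gt0//; lra.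
apply: ge_sup (lquot_neq0 x0) _.
move=> _ [h /= hp <-]; rewrite in_itv/= in hp; case/andP: hp => h0 hx.
by rewrite ler_pdivrMr//; have := lmin (x - h); lra.
Qed.

Lemma lderiv_le_rderiv (x : R) : 0 < x -> lderiv g x <= rderiv g x.
Proof.
move=> x0; rewrite lderiv_sup// rderiv_inf; last exact: ltW.
apply: ge_sup (lquot_neq0 x0) _.
move=> _ [h /= hp <-]; rewrite in_itv/= in hp.
apply: lb_le_inf (rquot_neq0 x) _.
move=> _ [h' /= hp' <-]; rewrite in_itv/= andbT in hp'.
by rewrite lquot rquot; apply: slope_12_23; lra.
Qed.

End OneSidedDerivatives.

Section LeastMinimizer.
Variables (R : realType) (f : R -> R) (xbar L : R).
Hypothesis f_cvx : convex_on_ge0 f.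
Hypothesis f_lip : forall a b, 0 <= a -> a <= b -> b <= xbar ->
  `|f b - f a| <= L * (b - a).
Hypothesis xbar0 : 0 <= xbar.
Hypothesis xbar_min : right_min f xbar.

Let A := [set x | 0 <= x <= xbar /\ right_min f x].
Let m := inf A.

Let A_xbar : A xbar.
Proof. by split; rewrite ?lexx ?xbar0. Qed.

Let A_inf : has_inf A.
Proof. by split; [exists xbar|exists 0 => x [/andP[]]]. Qed.

Let m_le (x : R) : A x -> m <= x.
Proof. exact: (ge_inf A_inf.2). Qed.

Let m_ge0 : 0 <= m.
Proof. by apply: lb_le_inf A_inf.1 _ => x [/andP[]]. Qed.

Let m_le_xbar : m <= xbar.
Proof. exact: m_le. Qed.

Let lip_le (a b : R) : 0 <= a -> a <= b -> b <= xbar ->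
  f a <= f b + `|L| * (b - a) /\ f b <= f a + `|L| * (b - a).
Proof.
move=> a0 ab bB; have := f_lip a0 ab bB; rewrite ler_norml => /andP[lo hi].
have : L * (b - a) <= `|L| * (b - a) by rewrite ler_wpM2r ?subr_ge0 ?ler_norm.
by split; lra.
Qed.

Let small_step (e : R) : 0 < e -> exists2 d, 0 < d & `|L| * d <= e.
Proof.
move=> e0; exists (e / (`|L| + 1)); first by rewrite divr_gt0 ?ltr_wpDl.
by rewrite mulrA ler_pdivrMr ?ltr_wpDl// mulrDr mulr1; lra.
Qed.

Let right_min_m : right_min f m.
Proof.
move=> w mw; apply/ler_addgt0Pr => e e0.
have [d d0 Ld] := small_step e0.
have [x [/andP[x0 xB] xmin] xm] := inf_adherent d0 A_inf.
have mx : m <= x by apply: m_le; split; rewrite ?x0.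
have near_m z : m <= z -> z <= x -> f m <= f z + e.
  move=> mz zx; have [+ _] := lip_le m_ge0 mz (le_trans zx xB).
  have : `|L| * (z - m) <= `|L| * d by rewrite ler_wpM2l//; rewrite -/m in xm; lra.
  lra.
have [xw|wx] := leP x w; last by apply: near_m => //; exact: ltW.
by apply: le_trans (near_m _ mx (lexx x)) _; rewrite lerD2r xmin.
Qed.

Let left_min_m : left_min f m.
Proof.
move=> y y0; rewrite le_eqVlt => /predU1P[->//|ym]; apply/ler_addgt0Pr => e e0.
have [d d0 Ld] := small_step e0.
pose d' := Num.min ((m - y) / 2) d.
have d'0 : 0 < d' by rewrite lt_min d0 divr_gt0 ?subr_gt0.
have d'd : d' <= d by rewrite ge_min lexx orbT.
have d'm : d' <= (m - y) / 2 by rewrite ge_min lexx.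
pose y' := m - d'.
have yy' : y < y' by rewrite /y'; lra.
have y'm : y' <= m by rewrite /y'; lra.
have y'B : 0 <= y' <= xbar by rewrite (le_trans y'm m_le_xbar) andbT; lra.
(* [y' < m] is not a right minimum, so [f] drops somewhere after [y'];
   by convexity it then drops from [y] to [y']. *)
have not_rmin : ~ right_min f y'.
  by move=> rmin; have := m_le (conj y'B rmin); rewrite /y'; lra.
have [w /not_implyP[y'w /negP]] : exists w, ~ (y' <= w -> f y' <= f w).
  exact/existsNP.
rewrite -ltNge => fwy'.
have := convex_on_ge0_descent f_cvx y0 yy' y'w fwy'.
have [_ +] := lip_le (ltW (le_lt_trans y0 yy')) y'm m_le_xbar.
have : `|L| * (m - y') <= `|L| * d by rewrite ler_wpM2l// /y'; lra.
lra.
Qed.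

Lemma exists_least_right_min : exists m, [/\ 0 <= m <= xbar, right_min f m,
  left_min f m & forall y, 0 <= y <= xbar -> right_min f y -> m <= y].
Proof.
exists m; split => //; first by rewrite m_ge0 m_le_xbar.
by move=> y yB rmin; exact: m_le.
Qed.

End LeastMinimizer.


Section ReducedProblem.
Variables (R : realType) (g : R -> R) (K T cb cr xbar : R).
Hypothesis g_cvx : convex_on_ge0 g.
Hypothesis g_slope0 : forall h, 0 < h -> K * h <= g h - g 0.
Hypotheses (T_gt0 : 0 < T) (cb_gt0 : 0 < cb) (xbar_ge0 : 0 <= xbar).

Let c := cr / cb.
Let tilt (y : R) := g y - c * y.

Let rminP (x : R) : 0 <= x -> c <= rderiv g x <-> right_min tilt x.
Proof. by move=> x0; have := le_rderivP g_cvx g_slope0 c x0. Qed.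

Let lminP (x : R) : 0 < x -> lderiv g x <= c <-> left_min tilt x.
Proof. by move=> x0; have := le_lderivP g_cvx c x0. Qed.

Let optimal_of_min (x : R) : 0 <= x <= xbar ->
  (forall y, 0 <= y <= xbar -> tilt x <= tilt y) -> optimal T cb cr xbar g x.
Proof.
move=> xB xmin; split => // y yB; rewrite /objective ler_pM2l//.
have e z : cb * (c * z) = cr * z by rewrite /c; field; rewrite gt_eqF.
by have := ler_wpM2l (ltW cb_gt0) (xmin y yB); rewrite /tilt !mulrBr !e.
Qed.

Lemma optimal_left_end : (xbar = 0 \/ cr / cb <= rderiv g 0) ->
  optimal T cb cr xbar g 0.
Proof.
case=> [xbar_eq0|/(rminP (lexx 0)) rmin0];
  apply: optimal_of_min; rewrite ?lexx ?xbar_ge0// => y /andP[y0 yB].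
  by rewrite (_ : y = 0)//; apply/le_anti; rewrite y0 -xbar_eq0 yB.
exact: rmin0.
Qed.

Lemma optimal_right_end : 0 < xbar -> lderiv g xbar < cr / cb ->
  optimal T cb cr xbar g xbar.
Proof.
move=> xbar_gt0 /ltW/(lminP xbar_gt0) lmin.
by apply: optimal_of_min; rewrite ?lexx ?xbar_ge0// => y /andP[]; exact: lmin.
Qed.

Lemma optimal_min_Xstar : 0 < xbar -> rderiv g 0 < cr / cb <= lderiv g xbar ->
  exists2 x, (Xstar cb cr xbar g x /\ forall y, Xstar cb cr xbar g y -> x <= y)
           & optimal T cb cr xbar g x.
Proof.
move=> xbar_gt0 /andP[rd0_lt c_le_ld].
have tilt_cvx : convex_on_ge0 tilt by exact: convex_on_ge0_tilt.
have tilt_slope0 y : 0 < y -> (K - c) * y <= tilt y - tilt 0.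
  by move=> y0; rewrite /tilt mulr0 subr0 mulrBl; have := g_slope0 y0; lra.
have [L tilt_lip] := convex_lipschitz tilt_cvx tilt_slope0 xbar.
have xbar_rmin : right_min tilt xbar.
  apply/(rminP xbar_ge0).
  exact: le_trans c_le_ld (lderiv_le_rderiv g_cvx g_slope0 xbar_gt0).
have [m [/andP[m0 mB] m_rmin m_lmin m_least]] :=
  exists_least_right_min tilt_cvx tilt_lip xbar_ge0 xbar_rmin.
have m_gt0 : 0 < m.
  rewrite lt_neqAle m0 andbT; apply/eqP => m_eq0.
  have : c <= rderiv g 0 by apply/(rminP (lexx 0)); rewrite m_eq0.
  by rewrite leNgt rd0_lt.
exists m; first split.
- split; first by rewrite m_gt0.
  by apply/andP; split; [apply/(lminP m_gt0)|apply/(rminP m0)].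
- move=> y [/andP[y_gt0 yB] /andP[_ c_le]].
  by apply: m_least; [rewrite yB ltW|apply/(rminP (ltW y_gt0))].
apply: optimal_of_min => [|y /andP[y0 _]]; first by rewrite m0.
exact: (right_left_min m_rmin m_lmin).
Qed.

End ReducedProblem.

Theorem theorem2 (R : realType) (etap etam : R) (P : probability R R)
  (ystar : R) (g : R -> R) (T cb cr xbar : R) :
  0 < etap <= 1 -> 0 < etam <= 1 ->
  P [set` `[-1, 1]] = 1%E ->
  (\int[P]_x (x%:E) = 0)%E ->
  (forall xr, 0 <= xr -> ydot P etap etam (g xr) xr = ystar) ->
  0 < T -> 0 < cb -> 0 <= cr -> 0 <= xbar ->
  [/\ (xbar = 0 \/ cr / cb <= rderiv g 0) -> optimal T cb cr xbar g 0,
      (0 < xbar /\ lderiv g xbar < cr / cb) -> optimal T cb cr xbar g xbar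
    & (0 < xbar /\ rderiv g 0 < cr / cb <= lderiv g xbar) ->
      exists2 x, (Xstar cb cr xbar g x /\
                  forall y, Xstar cb cr xbar g y -> x <= y)
               & optimal T cb cr xbar g x].
Proof.
move=> etap01 etam01 P11 _ g_level T_gt0 cb_gt0 _ xbar_ge0.
have g_cvx := g_convex P11 etap01 etam01 g_level.
have g_slope := g_slope0_lb P11 etap01 etam01 g_level.
split.
- exact: optimal_left_end g_cvx g_slope T_gt0 cb_gt0 xbar_ge0.
- by case; exact: optimal_right_end g_cvx T_gt0 cb_gt0 xbar_ge0.
- by case; exact: optimal_min_Xstar g_cvx g_slope T_gt0 cb_gt0 xbar_ge0.
Qed.
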